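(* Let $b$ be a positive integer, and let $w$ and $w'$ be (the 0-1 sequences of) $b$-bounded walks, possibly of different lengths. Then the concatenation of $w$ followed by the reversal of $w'$ (i.e. the sequence $w_1\cdots w_k\,w'_{k'}w'_{k'-1}\cdots w'_1$) is a bidirectional ballot sequence; equivalently, the concatenation of the walk $w$ followed by the reverse of the walk $w'$ is a bidirectional ballot walk.
   Context: A ballot sequence is a 0-1 sequence in which every nonempty prefix contains strictly more 1's than 0's; a bidirectional ballot sequence is a 0-1 sequence in which every nonempty prefix and every nonempty suffix contains strictly more 1's than 0's. A 0-1 sequence corresponds to a lattice walk starting at the origin, where each term $1$ is a step $(1,1)$ and each term $0$ is a step $(1,-1)$; ballot walks and bidirectional ballot walks are the walks of ballot sequences and bidirectional ballot sequences. For a positive integer $b$, a $b$-bounded walk is a ballot walk that never visits a point with $y>2b$ and whose endpoint has $y>b$. *)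

From mathcomp Require Import all_boot all_order all_algebra.
Set Implicit Arguments. Unset Strict Implicit. Unset Printing Implicit Defensive.
Import Order.TTheory GRing.Theory Num.Theory.
Local Open Scope ring_scope.

(* A 0-1 sequence is a [seq bool]: [true] = 1 (up-step), [false] = 0 (down-step). *)

Definition height (s : seq bool) : int :=
  (count id s)%:Z - (count negb s)%:Z.

Definition ballot (s : seq bool) : Prop :=
  forall n : nat, (0 < n <= size s)%N -> 0 < height (take n s).

Definition bidirectional_ballot (s : seq bool) : Prop :=
  ballot s /\
  forall n : nat, (0 < n <= size s)%N -> 0 < height (drop (size s - n) s).

Definition bounded_walk (b : nat) (s : seq bool) : Prop :=
  ballot s /\
  (forall n : nat, (n <= size s)%N -> height (take n s) <= (2 * b)%:Z) /\
  b%:Z < height s.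

From mathcomp Require Import all_boot all_order all_algebra.
From mathcomp Require Import zify ring.
Import Order.TTheory GRing.Theory Num.Theory.
Local Open Scope ring_scope.

(* A prefix of [w ++ rev w'] is either a prefix of [w], which is positive since
   [w] is ballot, or [w] followed by a reversed suffix of [w'].  A suffix of [w']
   loses at most [2b] from the final height of [w'] (its complementary prefix stays
   below [2b]), so [w] followed by it has height above [b + b - 2b = 0].  Suffixes
   of [w ++ rev w'] are the reversed prefixes of [w' ++ rev w], and the same
   argument applies with the roles exchanged. *)

Lemma heightD (s t : seq bool) : height (s ++ t) = height s + height t.
Proof. by rewrite /height !count_cat !PoszD; ring. Qed.

Lemma height_rev (s : seq bool) : height (rev s) = height s.
Proof. by rewrite /height !count_rev. Qed.

Lemma ballot_cat_rev {c : int} {w w' : seq bool} :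
  ballot w -> (forall m, (m <= size w')%N -> height (take m w') <= c) ->
  c < height w + height w' -> ballot (w ++ rev w').
Proof.
move=> ballot_w prefix_le_c height_gt_c n /andP[n_gt0 n_le].
rewrite take_cat; case: ltnP => [n_lt | n_ge]; first by apply: ballot_w; rewrite n_gt0 ltnW.
rewrite take_rev heightD height_rev.
set m := (size w' - (n - size w))%N.
have := prefix_le_c m (leq_subr _ _).
have split_w' : height w' = height (take m w') + height (drop m w')
  by rewrite -heightD cat_take_drop.
lia.
Qed.

Lemma bidirectional_ballotP (s : seq bool) :
  ballot s -> ballot (rev s) -> bidirectional_ballot s.
Proof.
move=> ballot_s ballot_rev_s; split=> // n n_range.
by rewrite -height_rev -take_rev; apply: ballot_rev_s; rewrite size_rev.
Qed.

Lemma bounded_walk_cat_rev (b : nat) (w w' : seq bool) :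
  bounded_walk b w -> bounded_walk b w' -> ballot (w ++ rev w').
Proof.
move=> [ballot_w [_ height_w]] [_ [prefix_w' height_w']].
by apply: (ballot_cat_rev ballot_w prefix_w'); lia.
Qed.

Theorem lemma11 (b : nat) (w w' : seq bool) :
  (0 < b)%N -> bounded_walk b w -> bounded_walk b w' ->
  bidirectional_ballot (w ++ rev w').
Proof.
move=> _ bw bw'; apply: bidirectional_ballotP; first exact: bounded_walk_cat_rev bw bw'.
by rewrite rev_cat revK; exact: bounded_walk_cat_rev bw' bw.
Qed.
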